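(* In the idealized setting described in the context, the PAIR framework uses at most $O(\lvert\mathcal S\rvert^2\log D)$ samples (rolled-out trajectories) to learn a policy $\pi$ such that $s\xrightarrow{\pi}g$ for every state $s$ and every goal $g$ reachable from $s$ (i.e. with $d(s,g)<\infty$).
   Context: Setting: a goal-conditioned Markov decision process with finite state space $\mathcal S$, finite action set $\mathcal A$, deterministic transitions, goal space $\mathcal G=\mathcal S$, and sparse reward $r(s,a,g)=\mathbb I\{s=g\}$. A policy is $\pi(a|s,g)$. Write $s\xrightarrow{\pi} g$ if, starting at $s_0=s$ and choosing $a_i\sim\pi(\cdot|s_i,g)$, $s_{i+1}\sim P(\cdot|s_i,a_i)$, the goal $g$ is reached with probability $1$. Let $d(s,s')$ be the minimum $t$ such that some policy reaches $s_t=s'$ from $s_0=s$ with probability $1$ ($+\infty$ if none), and $D=\max\{d(s,s'):d(s,s')<\infty\}$. Assumptions: the initial policy satisfies: if $P(s'|s,a)=1$ then $\pi^{(0)}(a|s,g=s')=1$. In each iteration every state-goal pair $(s,g)\in\mathcal S\times\mathcal S$ is sampled at least once and only a constant number of times. Idealized PAIR iteration $k$: for each pair $(s,g)$, roll out $\pi^{(k-1)}$ from $s$ toward $g$; if it succeeds the trajectory is added to the dataset; otherwise task reduction selects a subgoal $s'$ maximizing $V(s,s')\cdot V(s',g)$, where $V$ is the goal-conditioned value function (equal to $1$ exactly on pairs $(x,y)$ with $x\xrightarrow{\pi^{(k-1)}}y$), executes $\pi^{(k-1)}(\cdot|\cdot,s')$ from $s$ and then $\pi^{(k-1)}(\cdot|\cdot,g)$,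 and adds the resulting successful trajectory from $s$ to $g$ if any. The supervised learning step then produces $\pi^{(k)}$ with $s\xrightarrow{\pi^{(k)}}g$ for every pair $(s,g)$ for which the dataset contains a successful trajectory from $s$ to $g$. *)

From mathcomp Require Import all_boot all_order all_algebra.
From mathcomp Require Import reals.
Set Implicit Arguments. Unset Strict Implicit. Unset Printing Implicit Defensive.
Import Order.TTheory GRing.Theory Num.Theory.
Local Open Scope ring_scope.

(* A goal-conditioned MDP with finite state space S, finite action set A and
   deterministic transitions step : S -> A -> S, i.e. P(s'|s,a) = [step s a == s'].
   Goal space = S, reward r(s,a,g) = [s == g].
   A policy pi is represented as pi x g a = pi(a | x, g). *)

Section MDP.
Variables (R : realType) (S A : finType) (step : S -> A -> S).

Definition is_policy (pi : S -> S -> A -> R) : Prop :=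
  forall x g, (forall a, 0 <= pi x g a) /\ \sum_(a : A) pi x g a = 1.

(* probability that the rollout of pi(.|.,g) started at x has visited g
   within the first t steps (time 0 included) *)
Fixpoint hit_prob (pi : S -> S -> A -> R) (g : S) (t : nat) (x : S) : R :=
  match t with
  | 0 => if x == g then 1 else 0
  | t'.+1 => if x == g then 1
             else \sum_(a : A) pi x g a * hit_prob pi g t' (step x a)
  end.

(* s --pi--> g : the goal g is reached with probability 1, i.e. the
   (nondecreasing) probabilities of reaching g within t steps tend to 1. *)
Definition reaches (pi : S -> S -> A -> R) (s g : S) : Prop :=
  forall eps : R, 0 < eps -> exists t, 1 - eps < hit_prob pi g t s.

(* distribution of s_t when rolling out pi(.|.,g) from s_0 = s *)
Fixpoint state_dist (pi : S -> S -> A -> R) (g : S) (s : S) (t : nat) (y : S) : R :=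
  match t with
  | 0 => if y == s then 1 else 0
  | t'.+1 => \sum_(x : S) state_dist pi g s t' x *
               \sum_(a : A) pi x g a * (if step x a == y then 1 else 0)
  end.

Definition reach_at (s s' : S) (t : nat) : Prop :=
  exists pi, is_policy pi /\ state_dist pi s' s t s' = 1.

Definition is_dist (s s' : S) (t : nat) : Prop :=
  reach_at s s' t /\ forall t', (t' < t)%N -> ~ reach_at s s' t'.

Definition dist_finite (s s' : S) : Prop := exists t, reach_at s s' t.

Definition is_diameter (D : nat) : Prop :=
  (exists s s', is_dist s s' D) /\ (forall s s' t, is_dist s s' t -> (t <= D)%N).

End MDP.

From mathcomp Require Import all_boot all_order all_algebra.
From mathcomp Require Import reals.
From mathcomp Require Import ring lra zify.
From Stdlib Require Import Classical.
Set Implicit Arguments. Unset Strict Implicit.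
Import Order.TTheory GRing.Theory Num.Theory.
Local Open Scope ring_scope.

(* By induction on k, pi^(k) reaches every goal that some action sequence of
   length at most 2^k leads to.  For k = 0 this is the assumption on pi^(0).
   For the inductive step, split the sequence at its midpoint x: both halves
   are mastered by pi^(k-1), so V(s,x) V(x,g) = 1, hence the subgoal chosen
   by task reduction also has value product 1 and the composed trajectory is
   learned.  Since every reachable goal is reached by a sequence of length at
   most D, ceil(log2 D) iterations suffice, each rolling out at most 2c
   trajectories per state-goal pair. *)

Lemma unit_interval_mul_ge1 (R : realFieldType) (a b : R) :
  0 <= a <= 1 -> 0 <= b <= 1 -> 1 <= a * b -> a = 1 /\ b = 1.
Proof. by move=> /andP[? ?] /andP[? ?] ?; split; nra. Qed.

Section Walks.
Variables (R : realType) (S A : finType) (step : S -> A -> S).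

Definition reachable_in (n : nat) (s g : S) : Prop :=
  exists w : seq A, size w = n /\ foldl step s w = g.

Lemma reachable_in_split m n s g :
  reachable_in (m + n) s g -> exists x, reachable_in m s x /\ reachable_in n x g.
Proof.
move=> [w [size_w <-]]; exists (foldl step s (take m w)); split.
  by exists (take m w); rewrite size_take size_w; split=> //; case: ltnP; lia.
by exists (drop m w); rewrite size_drop size_w -foldl_cat cat_take_drop; split=> //; lia.
Qed.

Lemma state_dist_eq0 (pi : S -> S -> A -> R) g s t y :
  ~ reachable_in t s y -> state_dist step pi g s t y = 0.
Proof.
elim: t y => [|t IH] y unreach /=.
  by case: eqP => // y_s; case: unreach; exists [::]; rewrite y_s.
apply: big1 => x _.
case: (classic (reachable_in t s x)) => [[w [size_w walk_w]]|unreach_x].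
  rewrite big1 ?mulr0 // => a _; case: eqP => [step_a|_]; last by rewrite mulr0.
  by case: unreach; exists (rcons w a); rewrite size_rcons foldl_rcons size_w walk_w.
by rewrite IH // mul0r.
Qed.

Lemma reach_at_reachable_in s g t : reach_at R step s g t -> reachable_in t s g.
Proof.
move=> [pi [_ dist1]]; apply: NNPP => unreach.
by move: dist1; rewrite state_dist_eq0 // => /eqP; rewrite eq_sym oner_eq0.
Qed.

Lemma reachable_in_le_diameter D s g :
  is_diameter R step D -> dist_finite R step s g ->
  exists n, (n <= D)%N /\ reachable_in n s g.
Proof.
move=> [_ le_D] [t]; elim/ltn_ind: t => t IH reach_t.
case: (classic (exists t', (t' < t)%N /\ reach_at R step s g t')).
  by move=> [t' [lt_t' reach_t']]; apply: IH lt_t' reach_t'.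
move=> no_less.
exists t; split; last exact: reach_at_reachable_in.
by apply: (le_D s g); split=> // t' ? ?; apply: no_less; exists t'.
Qed.

Lemma reaches_refl (pi : S -> S -> A -> R) s : reaches step pi s s.
Proof. by move=> e e_gt0; exists 0%N => /=; rewrite eqxx; lra. Qed.

Lemma reaches_step (pi : S -> S -> A -> R) s a :
  is_policy pi -> pi s (step s a) a = 1 -> reaches step pi s (step s a).
Proof.
move=> pi_policy pi_a e e_gt0; have [<-|ne] := eqVneq s (step s a).
  exact: reaches_refl.
exists 1%N => /=; rewrite (negbTE ne) (bigD1 a) //= eqxx pi_a mulr1.
suff : 0 <= \sum_(b | b != a)
  pi s (step s a) b * (if step s b == step s a then 1 else 0) by lra.
apply: sumr_ge0 => b _; apply: mulr_ge0; last by case: ifP.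
by case: (pi_policy s (step s a)).
Qed.

End Walks.

Section PAIR.
Variables (R : realType) (S A : finType) (step : S -> A -> S).
Variables (pol : nat -> S -> S -> A -> R) (V : nat -> S -> S -> R).
Variables (sub : nat -> S -> S -> S) (Data : nat -> S -> S -> Prop).
Hypothesis pol_policy : forall k, is_policy (pol k).
Hypothesis pol0_step : forall s a, pol 0%N s (step s a) a = 1.
Hypothesis V_range : forall k x y, 0 <= V k x y <= 1.
Hypothesis V_eq1 : forall k x y, V k x y = 1 <-> reaches step (pol k) x y.
Hypothesis sub_max :
  forall k s g s', V k s s' * V k s' g <= V k s (sub k s g) * V k (sub k s g) g.
Hypothesis Data_reduced : forall k s g, reaches step (pol k) s (sub k s g) ->
  reaches step (pol k) (sub k s g) g -> Data k s g.
Hypothesis Data_learned : forall k s g, Data k s g -> reaches step (pol k.+1) s g.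

Lemma task_reduction_reaches k s x g :
  reaches step (pol k) s x -> reaches step (pol k) x g -> reaches step (pol k.+1) s g.
Proof.
move=> /V_eq1 V_sx /V_eq1 V_xg.
have [V_s_sub V_sub_g] : V k s (sub k s g) = 1 /\ V k (sub k s g) g = 1.
  by apply: unit_interval_mul_ge1; rewrite // -[1]mulr1 -{1}V_sx -V_xg.
by apply/Data_learned/Data_reduced; apply/V_eq1.
Qed.

Lemma reaches_within_pow2 k n s g :
  (n <= 2 ^ k)%N -> reachable_in step n s g -> reaches step (pol k) s g.
Proof.
elim: k n s g => [|k IH] n s g le_n.
  case: n le_n => [|[|//]] _ [w [size_w <-]].
    by case: w size_w => // _; apply: reaches_refl.
  by case: w size_w => [|a []] // _; apply: reaches_step.
set m := minn n (2 ^ k); have -> : n = (m + (n - m))%N by lia.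
move=> /reachable_in_split [x [walk_sx walk_xg]].
apply: (task_reduction_reaches (x := x)).
  by apply: IH walk_sx; apply: geq_minr.
by apply: IH walk_xg; rewrite expnS in le_n; lia.
Qed.

End PAIR.

Lemma sum_pairs_le (S : finType) (f : S -> S -> nat) b :
  (forall s g, f s g <= b)%N -> (\sum_(s : S) \sum_(g : S) f s g <= #|S| ^ 2 * b)%N.
Proof.
move=> le_b; apply: (@leq_trans (\sum_(s : S) \sum_(g : S) b)%N).
  by apply: leq_sum => s _; apply: leq_sum => g _.
rewrite (eq_bigr (fun _ => #|S| * b)%N) => [|s _]; last by rewrite sum_nat_const.
by rewrite sum_nat_const mulnA.
Qed.

Theorem lemmaA2 (c : nat) :
  exists C : nat,
  forall (R : realType) (S A : finType) (step : S -> A -> S) (D : nat)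
    (pol : nat -> S -> S -> A -> R)
    (V : nat -> S -> S -> R) (sub : nat -> S -> S -> S)
    (nsamp ntraj : nat -> S -> S -> nat) (Data : nat -> S -> S -> Prop),
    @is_diameter R S A step D ->
    (forall k, is_policy (pol k)) ->
    (* initial policy: if P(s'|s,a) = 1 then pi0(a|s,g=s') = 1 *)
    (forall s a, pol 0%N s (step s a) a = 1) ->
    (* each pair sampled at least once and at most c times per iteration *)
    (forall k s g, (1 <= nsamp k s g <= c)%N) ->
    (* each sample rolls out the policy, and possibly the task-reduced rollout *)
    (forall k s g, (ntraj k s g <= 2 * nsamp k s g)%N) ->
    (* goal-conditioned value function of pi^(k) *)
    (forall k x y, 0 <= V k x y <= 1) ->
    (forall k x y, V k x y = 1 <-> reaches step (pol k) x y) ->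
    (* task reduction: subgoal maximizing V(s,s') * V(s',g) *)
    (forall k s g s', V k s s' * V k s' g <= V k s (sub k s g) * V k (sub k s g) g) ->
    (* successful direct rollouts are added to the dataset *)
    (forall k s g, reaches step (pol k) s g -> Data k s g) ->
    (* successful task-reduced rollouts are added to the dataset *)
    (forall k s g, reaches step (pol k) s (sub k s g) ->
                   reaches step (pol k) (sub k s g) g -> Data k s g) ->
    (* supervised learning step *)
    (forall k s g, Data k s g -> reaches step (pol k.+1) s g) ->
    exists K : nat,
      (forall s g, @dist_finite R S A step s g -> reaches step (pol K) s g) /\
      (\sum_(k < K) \sum_(s : S) \sum_(g : S) ntraj k s g
         <= C * #|S| ^ 2 * up_log 2 D)%N.
Proof.
(* Direct rollouts need no separate treatment: they are task reductions with subgoal g. *)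
exists (2 * c)%N => R S A step D pol V sub nsamp ntraj Data diamD pol_policy
  pol0_step nsamp_range ntraj_le V_range V_eq1 sub_max _ Data_reduced Data_learned.
exists (up_log 2 D); split.
  move=> s g /(reachable_in_le_diameter diamD) [n [le_nD walk_n]].
  apply: (reaches_within_pow2 pol_policy pol0_step V_range V_eq1 sub_max
    Data_reduced Data_learned _ walk_n).
  exact: leq_trans le_nD (up_logP _ _).
have per_iteration k : (\sum_(s : S) \sum_(g : S) ntraj k s g <= #|S| ^ 2 * (2 * c))%N.
  by apply: sum_pairs_le => s g; have := ntraj_le k s g; have := nsamp_range k s g; lia.
apply: (@leq_trans (\sum_(k < up_log 2 D) #|S| ^ 2 * (2 * c))%N).
  by apply: leq_sum => k _; apply: per_iteration.
by rewrite sum_nat_const card_ord; apply: eq_leq; ring.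
Qed.
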